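(* In a two-player perfect-information game of depth $D$, let $U_s$ be the exact EPFs and $\{\tilde U_s\}$ learned EPFs with targets $\tilde U'_s$, as in the context. If $L_\infty(\tilde U_s,\tilde U'_s)\le\epsilon$ for all $s\in\mathcal S$, then for every $s\in\mathcal S$, $$\max_{\mu_2\in[\underline V(s),\overline V(s)]}|\tilde U_s(\mu_2)-U_s(\mu_2)|\le\epsilon D.$$
   Context: A two-player perfect-information game is a finite rooted tree with states $\mathcal S$. Its leaves $\mathcal L$ carry payoffs $r_1(\ell),r_2(\ell)$ for the leader $\mathsf P_1$ and the follower $\mathsf P_2$. Non-leaf states are partitioned into leader states $\mathcal S_1$ and follower states $\mathcal S_2$, and $\mathcal C(s)$ denotes the children of $s$. The depth $D$ is the maximum number of edges on a root-to-leaf path. Bounds, defined by backward induction: - $\underline V(\ell)=\overline V(\ell)=r_2(\ell)$ for leaves; - $\underline V(s)=\min_{s'}\underline V(s')$ for $s\in\mathcal S_1$; - $\underline V(s)=\max_{s'}\underline V(s')$ for $s\in\mathcal S_2$; - $\overline V(s)=\max_{s'}\overline V(s')$ for every non-leaf $s$. For $s\in\mathcal S_2$ and $s'\in\mathcal C(s)$, let $\tau(s')=\max_{s^!\in\mathcal C(s),s^!\ne s'}\underline V(s^!)$. Let $\beta(s')=\tau(s')$ if the parent of $s'$ is in $\mathcal S_2$, and $-\infty$ if it is in $\mathcal S_1$. Operators, for $g:\mathbb R\to\mathbb R\cup\{-\infty\}$: - $\bigwedge_i g_i$ is the pointwise infimum of all concave $h\ge\max_i g_i$; - $[g\triangleright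 t](\mu)=g(\mu)$ for $\mu\ge t$ and $-\infty$ otherwise. Exact EPFs: $U_\ell(\mu)=r_1(\ell)$ if $\mu=r_2(\ell)$ and $-\infty$ otherwise; $U_s=\bigwedge_{s'\in\mathcal C(s)}(U_{s'}\triangleright\beta(s'))$. Learned EPFs: $\tilde U_\ell=U_\ell$ for leaves. For non-leaf $s$, $\tilde U_s$ is the piecewise linear interpolation of finitely many points with $x$-coordinates in $[\underline V(s),\overline V(s)]$ including both endpoints. It is real-valued there and $-\infty$ outside. Targets: $\tilde U'_s=\bigwedge_{s'\in\mathcal C(s)}(\tilde U_{s'}\triangleright\beta(s'))$ for non-leaf $s$, and $\tilde U'_\ell=\tilde U_\ell$. The loss is $L_\infty(f,g)=\sup_\mu|f(\mu)-g(\mu)|$, with $|(-\infty)-(-\infty)|=0$. *)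

From HB Require Import structures.
From mathcomp Require Import all_boot all_order all_algebra.
From mathcomp Require Import boolp classical_sets reals constructive_ereal ereal.

Set Implicit Arguments.
Unset Strict Implicit.
Unset Printing Implicit Defensive.

Import Order.TTheory GRing.Theory Num.Theory.
Local Open Scope ring_scope.
Local Open Scope classical_set_scope.

Section Game.
Variable R : realType.

(** A finite game tree.  [Leaf r1 r2] carries the payoffs of the leader P1
    (r1) and of the follower P2 (r2).  [Node isLeader cs] is a leader state
    (in S1) when [isLeader = true], a follower state (in S2) otherwise, with
    children [cs]. *)
Inductive gtree : Type :=
| Leaf of R & R
| Node of bool & seq gtree.

Definition dummy : gtree := Leaf 0 0.

Fixpoint wf (t : gtree) : bool :=
  match t with
  | Leaf _ _ => true
  | Node _ cs => (size cs != 0)%N && all wf cs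
  end.

Fixpoint depth (t : gtree) : nat :=
  match t with
  | Leaf _ _ => 0%N
  | Node _ cs => (foldr maxn 0%N (map depth cs)).+1
  end.

Definition minl (s : seq R) : R := foldr Num.min (head 0 s) s.
Definition maxl (s : seq R) : R := foldr Num.max (head 0 s) s.

Fixpoint Vlo (t : gtree) : R :=
  match t with
  | Leaf _ r2 => r2
  | Node b cs => if b then minl (map Vlo cs) else maxl (map Vlo cs)
  end.

Fixpoint Vhi (t : gtree) : R :=
  match t with
  | Leaf _ r2 => r2
  | Node _ cs => maxl (map Vhi cs)
  end.

Definition beta (b : bool) (cs : seq gtree) (i : nat) : \bar R :=
  if b then -oo%E
  else (\big[Order.max/-oo%E]_(j <- iota 0 (size cs) | j != i)
          (Vlo (nth dummy cs j))%:E)%E.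

(** concavity of an extended-real valued function (convex hypograph) *)
Definition concave (h : R -> \bar R) : Prop :=
  forall (x y a b t : R), (0 <= t <= 1)%R ->
    (a%:E <= h x)%E -> (b%:E <= h y)%E ->
    ((t * a + (1 - t) * b)%R%:E <= h (t * x + (1 - t) * y)%R)%E.

Definition hull (gs : seq (R -> \bar R)) : R -> \bar R :=
  fun mu => ereal_inf
    [set h mu | h in [set h : R -> \bar R |
        concave h /\ (forall x, h x != +oo%E) /\
        (forall x, (\big[Order.max/-oo%E]_(g <- gs) g x <= h x)%E)]].

Definition restr (g : R -> \bar R) (t : \bar R) : R -> \bar R :=
  fun mu => if (t <= mu%:E)%E then g mu else -oo%E.

Definition Uleaf (r1 r2 : R) : R -> \bar R :=
  fun mu => if mu == r2 then r1%:E else -oo%E.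

Fixpoint U (t : gtree) : R -> \bar R :=
  match t with
  | Leaf r1 r2 => Uleaf r1 r2
  | Node b cs =>
      let us := map U cs in
      hull [seq restr (nth (fun _ => -oo%E) us i) (beta b cs i)
           | i <- iota 0 (size cs)]
  end.

(** states are addressed by paths from the root: [sub t p] is the state
    reached from [t] by following child indices [p]; child [i] of the state
    at address [p] has address [rcons p i]. *)
Fixpoint sub (t : gtree) (p : seq nat) : option gtree :=
  match p with
  | [::] => Some t
  | i :: p' =>
      match t with
      | Leaf _ _ => None
      | Node _ cs => if (i < size cs)%N then sub (nth dummy cs i) p' else None
      end
  end.

Definition pl_interp (a b : R) (f : R -> \bar R) : Prop :=
  exists (xs ys : seq R),
    [/\ sorted <%R xs, head 0 xs = a, last 0 xs = b, (size xs != 0)%N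
      & size ys = size xs] /\
    f a = (head 0 ys)%:E /\
        (forall k mu, (k.+1 < size xs)%N ->
            nth 0 xs k <= mu <= nth 0 xs k.+1 ->
            f mu = (nth 0 ys k + (nth 0 ys k.+1 - nth 0 ys k) *
                      (mu - nth 0 xs k) / (nth 0 xs k.+1 - nth 0 xs k))%R%:E) /\
    (forall mu, ~~ (a <= mu <= b) -> f mu = -oo%E).

Definition learned (t : gtree) (Ut : seq nat -> R -> \bar R) : Prop :=
  forall p s, sub t p = Some s ->
    match s with
    | Leaf r1 r2 => Ut p = Uleaf r1 r2
    | Node _ _ => pl_interp (Vlo s) (Vhi s) (Ut p)
    end.

Definition target (t : gtree) (Ut : seq nat -> R -> \bar R) (p : seq nat)
    : R -> \bar R :=
  match sub t p with
  | Some (Node b cs) =>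
      hull [seq restr (Ut (rcons p i)) (beta b cs i) | i <- iota 0 (size cs)]
  | _ => Ut p
  end.

Definition edist (x y : \bar R) : \bar R :=
  if (x == -oo%E) && (y == -oo%E) then 0%E else `|x - y|%E.

Definition Linf (f g : R -> \bar R) : \bar R :=
  ereal_sup [set edist (f mu) (g mu) | mu in [set: R]].

End Game.

From HB Require Import structures.
From mathcomp Require Import all_boot all_order all_algebra.
From mathcomp Require Import boolp classical_sets reals constructive_ereal ereal.
From mathcomp Require Import lra.
Import Order.TTheory GRing.Theory Num.Theory.
Local Open Scope ring_scope.

Set Implicit Arguments.
Unset Strict Implicit.

(** The operator [hull] is monotone and commutes with adding a constant (a
    concave majorant shifted by [d] is again a concave majorant), and
    restriction [restr] acts pointwise; hence if every learned child EPF is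
    within [d] of the exact one, the hull of the learned children is within [d]
    of [U s].  Since the learned EPF at [s] is within [eps] of that hull, the
    error grows by at most [eps] per level, and induction on the depth gives
    [eps * depth]. *)

Section ExtendedRealCloseness.
Variable R : realType.
Local Open Scope ereal_scope.

Definition eclose (x y : \bar R) (d : R) : Prop :=
  (x = -oo /\ y = -oo) \/
  exists a b : R, [/\ x = a%:E, y = b%:E & (`|a - b| <= d)%R].

Lemma edist_ge0 (x y : \bar R) : 0 <= edist x y.
Proof. by rewrite /edist; case: ifP. Qed.

Lemma edist_le_eclose x y (d : R) : edist x y <= d%:E -> eclose x y d.
Proof.
rewrite /edist /eclose; case: x => [a| |]; case: y => [b| |] //=;
  rewrite ?lee_fin; try by auto.
by move=> ab; right; exists a, b.
Qed.

Lemma eclose_edist_le x y (d : R) : (0 <= d)%R -> eclose x y d -> edist x y <= d%:E.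
Proof. by move=> d_ge0 [[-> ->]|[a [b [-> -> ab]]]]; rewrite /edist /= lee_fin. Qed.

Lemma eclose_sym x y d : eclose x y d -> eclose y x d.
Proof.
case=> [[-> ->]|[a [b [-> -> ab]]]]; first by left.
by right; exists b, a; rewrite distrC.
Qed.

Lemma eclose_widen x y d d' : eclose x y d -> (d <= d')%R -> eclose x y d'.
Proof.
case=> [xy|[a [b [-> -> ab]]]] dd'; first by left.
by right; exists a, b; split=> //; apply: le_trans dd'.
Qed.

Lemma eclose_le_addr x y d : eclose x y d -> x <= y + d%:E.
Proof.
case=> [[-> ->]|[a [b [-> -> ab]]]]; first by rewrite leNye.
by rewrite -EFinD lee_fin; have := ler_norm (a - b)%R; lra.
Qed.

Lemma eclose_trans_le x y z (e d : R) :
  eclose x y e -> y <= z + d%:E -> z <= y + d%:E -> eclose x z (e + d).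
Proof.
case=> [[-> ->]|[a [b [-> -> ab]]]] yz zy.
  by left; split=> //; move: zy; rewrite addNye leeNy_eq => /eqP.
right; case: z yz zy => [c| |] //=; rewrite -!EFinD !lee_fin => bc cb.
exists a, c; split=> //; apply: le_trans (ler_distD b a c) _.
by apply: lerD => //; rewrite ler_norml; apply/andP; split; lra.
Qed.

Lemma eclose_Uleaf (r1 r2 mu : R) :
  eclose (Uleaf r1 r2 mu) (Uleaf r1 r2 mu) 0.
Proof.
rewrite /Uleaf; case: ifP => _; last by left.
by right; exists r1, r1; rewrite subrr normr0.
Qed.

End ExtendedRealCloseness.

Section HullShift.
Variable R : realType.
Local Open Scope ereal_scope.

Lemma concave_addr (h : R -> \bar R) (d : R) :
  concave h -> concave (fun y => h y + d%:E).
Proof.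
move=> h_concave x y a b t t01 ha hb.
have := h_concave x y (a - d)%R (b - d)%R t t01.
rewrite !EFinB !leeBlDr // => /(_ ha hb).
by rewrite -leeBlDr //; apply: le_trans; rewrite -EFinB lee_fin; lra.
Qed.

Lemma bigmax_le_addr (I : eqType) (F G : I -> \bar R) (s : seq I) (d : R) :
  (forall i, i \in s -> F i <= G i + d%:E) ->
  \big[Order.max/-oo]_(i <- s) F i <= \big[Order.max/-oo]_(i <- s) G i + d%:E.
Proof.
move=> FG; rewrite big_seq [X in _ <= X + _]big_seq.
apply: (big_ind2 (fun u v => u <= v + d%:E)) => //.
move=> u v u' v' uv u'v'; rewrite ge_max; apply/andP; split.
  by apply: le_trans uv _; rewrite leeD2r // le_max lexx.
by apply: le_trans u'v' _; rewrite leeD2r // le_max lexx orbT.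
Qed.

Lemma hull_le_addr (fs gs : seq (R -> \bar R)) (d : R) (x : R) :
  (forall y, \big[Order.max/-oo]_(f <- fs) f y
               <= \big[Order.max/-oo]_(g <- gs) g y + d%:E) ->
  hull fs x <= hull gs x + d%:E.
Proof.
move=> fs_gs; rewrite -leeBlDr //.
apply: le_ereal_inf_tmp => _ [h [h_concave [h_fin h_major]] <-].
rewrite leeBlDr //; apply: ge_ereal_inf; exists (h x + d%:E) => //.
exists (fun y => h y + d%:E) => //; split; first exact: concave_addr.
split; first by move=> y; case: (h y) (h_fin y).
by move=> y; apply: le_trans (fs_gs y) _; rewrite leeD2r.
Qed.

Lemma restr_le_addr (f g : R -> \bar R) (tau : \bar R) (d x : R) :
  f x <= g x + d%:E -> restr f tau x <= restr g tau x + d%:E.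
Proof. by rewrite /restr; case: ifP => // _ _; rewrite leNye. Qed.

Lemma hull_restr_le_addr (F G : nat -> R -> \bar R) (tau : nat -> \bar R)
    (s : seq nat) (d x : R) :
  (forall i, i \in s -> forall y, F i y <= G i y + d%:E) ->
  hull [seq restr (F i) (tau i) | i <- s] x
    <= hull [seq restr (G i) (tau i) | i <- s] x + d%:E.
Proof.
move=> FG; apply: hull_le_addr => y; rewrite !big_map.
by apply: bigmax_le_addr => i /FG/(_ y); apply: restr_le_addr.
Qed.

Lemma edist_le_Linf (f g : R -> \bar R) (mu : R) :
  edist (f mu) (g mu) <= Linf f g.
Proof. by apply: ereal_sup_ubound; exists mu. Qed.

Lemma Linf_ge0 (f g : R -> \bar R) : 0 <= Linf f g.
Proof. by apply: le_trans (edist_le_Linf f g 0%R); apply: edist_ge0. Qed.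

End HullShift.

Section GameTree.
Variable R : realType.

Lemma sub_rcons_nth (t : gtree R) p b cs i :
  (i < size cs)%N -> sub t p = Some (Node b cs) ->
  sub t (rcons p i) = Some (nth (dummy R) cs i).
Proof.
move=> ics; elim: p t => [|j p IH] [r1 r2|b' cs'] //=.
- by case=> _ ->; rewrite ics.
- by case: ifP => // _ /IH.
Qed.

Lemma depth_nth_le (cs : seq (gtree R)) i : (i < size cs)%N ->
  (depth (nth (dummy R) cs i) <= foldr maxn 0%N (map (@depth R) cs))%N.
Proof.
elim: cs i => [|c cs IH] [|i] //= ics; first exact: leq_maxl.
exact: leq_trans (IH i ics) (leq_maxr _ _).
Qed.

Lemma depth_sub_le (t : gtree R) p s :
  sub t p = Some s -> (depth s <= depth t)%N.
Proof.
elim: p t => [|j p IH] t /=; first by case=> <-.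
case: t => [//|b cs]; case: ifP => // jcs /IH s_le.
by apply: leq_trans s_le (leq_trans (depth_nth_le jcs) (leqnSn _)).
Qed.

Variables (t : gtree R) (Ut : seq nat -> R -> \bar R) (eps : R).
Hypothesis eps_ge0 : 0 <= eps.
Hypothesis Ut_learned : learned t Ut.
Hypothesis Ut_target :
  forall p s, sub t p = Some s -> (Linf (Ut p) (target t Ut p) <= eps%:E)%E.

Lemma learned_eclose p s : sub t p = Some s ->
  forall mu, eclose (Ut p mu) (U s mu) (eps * (depth s)%:R).
Proof.
(* Induction on a depth bound: the generated principle of [gtree] gives no
   hypothesis for the children stored in the list. *)
suff: forall n p s, (depth s <= n)%N -> sub t p = Some s ->
    forall mu, eclose (Ut p mu) (U s mu) (eps * (depth s)%:R).
  by move=> main; apply: main.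
elim=> [|n IH] {}p [r1 r2|b cs] //= s_le ps mu;
  try by have := Ut_learned ps => /= ->; rewrite mulr0; apply: eclose_Uleaf.
set k := foldr maxn 0%N _.
have children : forall i, i \in iota 0 (size cs) -> forall x,
    eclose (Ut (rcons p i) x) (nth (fun=> -oo%E) (map (@U R) cs) i x) (eps * k%:R).
  move=> i; rewrite mem_iota add0n => /andP[_ ics] x.
  rewrite (nth_map (dummy R)) //.
  have child_le := depth_nth_le ics.
  apply: eclose_widen (IH _ _ (leq_trans child_le s_le) (sub_rcons_nth ics ps) x) _.
  by rewrite ler_wpM2l // ler_nat.
have near_target : eclose (Ut p mu) (target t Ut p mu) eps.
  apply: edist_le_eclose; apply: le_trans (edist_le_Linf _ _ mu) _.
  exact: Ut_target ps.
rewrite /target ps in near_target.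
have := eclose_trans_le near_target
  (hull_restr_le_addr (G := fun i => nth _ _ i) _ mu
     (fun i ics x => eclose_le_addr (children i ics x)))
  (hull_restr_le_addr (F := fun i => nth _ _ i) _ mu
     (fun i ics x => eclose_le_addr (eclose_sym (children i ics x)))).
by rewrite -addn1 natrD mulrDr mulr1 addrC.
Qed.

End GameTree.

Theorem theorem5 (R : realType) (t : gtree R) (Ut : seq nat -> R -> \bar R)
    (eps : R) :
  wf t ->
  learned t Ut ->
  (forall p s, sub t p = Some s -> (Linf (Ut p) (target t Ut p) <= eps%:E)%E) ->
  forall p s, sub t p = Some s ->
    forall mu, Vlo s <= mu <= Vhi s ->
      (edist (Ut p mu) (U s mu) <= (eps * (depth t)%:R)%:E)%E.
Proof.
(* The bound holds at every [mu]. *)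
move=> _ Ut_learned Ut_target p s ps mu _.
have eps_ge0 : 0 <= eps.
  by rewrite -lee_fin; apply: le_trans (Linf_ge0 _ _) (Ut_target [::] t erefl).
apply: eclose_edist_le; first by rewrite mulr_ge0.
apply: eclose_widen (learned_eclose eps_ge0 Ut_learned Ut_target ps mu) _.
by rewrite ler_wpM2l // ler_nat (depth_sub_le ps).
Qed.
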